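(* Let $T=T(n,a,b)$ with $a\ge 0$, $b\ge a+2$ and $2(a+b)<n-1$, let $\ell=n-a-b$ and $x=x(T)$. Suppose $b<\frac{\ell}{2}$. Then (i) if $a\ge1$, then for $i=1,\dots,a$: $x_{v_i}-x_{v_{\ell+1-i}}<x_{v_{i+1}}-x_{v_{\ell-i}}$ and $x_{w_i}-x_{w_{\ell-i}}<x_{v_{i+1}}-x_{v_{\ell-i}}$; (ii) $x_{v_{a+1+i}}-x_{v_{\ell-b+1-i}}>x_{v_{a+2+i}}-x_{v_{\ell-b-i}}>0$ for $i=1,\dots,\lfloor\frac{\ell-b-a-1}{2}\rfloor-1$; (iii) $x_{v_{\ell-b+1}}<x_{v_{\ell-a}}$.
   Context: Hypergraphs have edges that are vertex subsets of size at least two; distance $d_T(u,v)$ in a hypertree is the length of a shortest loose path (an alternating sequence of distinct vertices and distinct edges $(v_0,e_1,v_1,\dots,e_p,v_p)$ with $v_{i-1},v_i\in e_i$ and non-consecutive edges disjoint). $D(T)$ is the distance matrix, $\rho(T)$ its largest eigenvalue, and $x(T)$ the unit positive eigenvector for $\rho(T)$ (distance Perron vector), with entries $x_v$ indexed by vertices. For integers $n,a,b$ with $0\le a\le b$ and $a+b\le\lfloor\frac{n-1}{2}\rfloor$, put $\ell=n-a-b$ and $I=\{1,\dots,a\}\cup\{\ell-b,\dots,\ell-1\}$; $T(n,a,b)$ is the hypertree with vertex set $\{v_1,\dots,v_\ell\}\cup\{w_i:i\in I\}$ and edges $\{v_i,w_i,v_{i+1}\}$ for $i\in I$ and $\{v_i,v_{i+1}\}$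 for $i\in\{1,\dots,\ell-1\}\setminus I$. *)

From HB Require Import structures.
From mathcomp Require Import all_boot all_order all_algebra.
From mathcomp Require Import reals.
Set Implicit Arguments. Unset Strict Implicit. Unset Printing Implicit Defensive.
Import Order.TTheory GRing.Theory Num.Theory.

(* A hypergraph is given by a vertex set [VS : {set V}] and a list of edges
   [E : seq {set V}] (each edge a subset of VS of size >= 2). *)

Section Hyper.
Variable V : finType.

(* [lpath E u vs es]: (u = v_0, e_1, v_1, ..., e_p, v_p) with
   vs = [v_1; ...; v_p] and es = [e_1; ...; e_p] is a loose path:
   distinct vertices, distinct edges taken from E, v_{i-1}, v_i in e_i,
   non-consecutive edges disjoint. *)
Definition lpath (E : seq {set V}) (u : V) (vs : seq V) (es : seq {set V}) : Prop :=
  [/\ size vs = size es,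
      uniq (u :: vs),
      uniq es && all (fun e => e \in E) es,
      (forall i, i < size es ->
         nth u (u :: vs) i \in nth set0 es i /\ nth u (u :: vs) i.+1 \in nth set0 es i)
    & (forall i j, i.+1 < j -> j < size es ->
         [disjoint nth set0 es i & nth set0 es j])].

Definition distance_matrix (VS : {set V}) (E : seq {set V}) (D : V -> V -> nat) : Prop :=
  forall u v, u \in VS -> v \in VS ->
    (exists vs es, [/\ lpath E u vs es, last u vs = v & size es = D u v]) /\
    (forall vs es, lpath E u vs es -> last u vs = v -> D u v <= size es).

Variable R : realType.
Local Open Scope ring_scope.

Definition dist_eigen (VS : {set V}) (D : V -> V -> nat) (lam : R) (y : V -> R) : Prop :=
  (exists2 u, u \in VS & y u != 0) /\
  (forall u, u \in VS -> \sum_(w in VS) (D u w)%:R * y w = lam * y u).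

Definition distance_perron_vector (VS : {set V}) (D : V -> V -> nat) (x : V -> R) : Prop :=
  exists rho : R,
    [/\ dist_eigen VS D rho x,
        (forall lam y, dist_eigen VS D lam y -> lam <= rho),
        (forall u, u \in VS -> 0 < x u)
      & \sum_(u in VS) x u ^+ 2 = 1].

End Hyper.

(* Ambient vertex type: (false, i) encodes v_i, (true, i) encodes w_i. *)
Definition Vt (n : nat) : finType := (bool * 'I_n.+1)%type.

Definition vv (n i : nat) : Vt n := (false, @inord n i).
Definition ww (n i : nat) : Vt n := (true, @inord n i).

Definition ell (n a b : nat) : nat := n - a - b.

Definition inI (n a b i : nat) : bool :=
  ((1 <= i) && (i <= a)) || ((ell n a b - b <= i) && (i <= (ell n a b).-1)).

Definition T_vertices (n a b : nat) : {set Vt n} :=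
  [set u : Vt n | (~~ u.1 && (1 <= u.2 <= ell n a b)) || (u.1 && inI n a b u.2)].

Definition T_edge (n a b i : nat) : {set Vt n} :=
  if inI n a b i then [set vv n i; ww n i; vv n i.+1] else [set vv n i; vv n i.+1].

Definition T_edges (n a b : nat) : seq {set Vt n} :=
  [seq T_edge n a b i | i <- iota 1 (ell n a b).-1].

(* Distances in T(n,a,b) are read off a linear layout of the vertices (v_i at 2i,
   w_i at 2i+1), so the eigen-equations of a positive eigenvector x of the distance
   matrix turn into three-term recurrences along the spine v_1, ..., v_l, driven by the
   pendant entries x_(w_i), together with one relation per pendant vertex.  All three
   claims compare x with its mirror image under a reflection of a stretch of the spine.
   (i) For the whole spine, a discrete minimum principle shows the reflected differences
   are positive; the recurrence then makes them increase away from the ends.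
   (ii) On the stretch v_(a+1), ..., v_(l-b+1) without pendant vertices the recurrence
   is homogeneous and convex, and the reflected differences decrease to the centre.
   (iii) On the stretch v_(l-b+1), ..., v_(l-a), where every edge has a pendant vertex,
   the reflected differences satisfy a homogeneous recurrence as well: either they are
   negative at its end, or they are nonnegative throughout, and then subtracting the
   eigen-equations at v_(l-b+1) and v_(l-a) writes rho (x_(v_(l-a)) - x_(v_(l-b+1))) as a
   sum of nonnegative terms and a positive one. *)

From HB Require Import structures.
From mathcomp Require Import all_boot all_order all_algebra.
From mathcomp Require Import reals.
From mathcomp Require Import zify ring lra.
Import Order.TTheory GRing.Theory Num.Theory.

Set Implicit Arguments.
Unset Strict Implicit.
Unset Printing Implicit Defensive.

Lemma lpath_rev (V : finType) (E : seq {set V}) u vs es : lpath E u vs es ->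
  lpath E (last u vs) (rev (belast u vs)) (rev es) /\
  last (last u vs) (rev (belast u vs)) = u.
Proof.
case=> hs hu /andP[hue hall] hadj hdis.
have hW : last u vs :: rev (belast u vs) = rev (u :: vs).
  by rewrite [in RHS]lastI rev_rcons.
set p := size es.
have hsz : size (u :: vs) = p.+1 by rewrite /= hs.
have nthW i : i <= p ->
    nth (last u vs) (last u vs :: rev (belast u vs)) i = nth u (u :: vs) (p - i).
  move=> hi; rewrite hW nth_rev hsz //; rewrite (set_nth_default u); last by rewrite hsz; lia.
  by congr nth; lia.
split; last by rewrite (last_nth (last u vs)) size_rev size_belast hs nthW // subnn.
split.
- by rewrite size_rev size_belast hs size_rev.
- by rewrite hW rev_uniq.
- by rewrite rev_uniq hue all_rev.
- move=> i; rewrite size_rev => hi.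
  rewrite !nthW ?nth_rev; try lia.
  have [h1 h2] := hadj (p - i.+1) ltac:(lia).
  by have -> : p - i = (p - i.+1).+1 by lia.
- move=> i j hij hj; rewrite size_rev in hj.
  rewrite !nth_rev //; last by lia.
  by rewrite disjoint_sym; apply: hdis; rewrite -/p; lia.
Qed.

Lemma nat_up_ind (P : nat -> Prop) lo hi :
  P lo -> (forall k, lo <= k < hi -> P k -> P k.+1) -> forall k, lo <= k <= hi -> P k.
Proof.
move=> P0 PS k /andP[]; elim: k => [|k IH] hlo hhi; first by have <- : lo = 0 by lia.
case: (eqVneq lo k.+1) => [<- // | hne].
by apply: PS; [lia | apply: IH; lia].
Qed.

Lemma nat_down_ind (P : nat -> Prop) lo hi :
  P hi -> (forall k, lo < k <= hi -> P k -> P k.-1) -> forall k, lo <= k <= hi -> P k.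
Proof.
move=> Ptop PS k hk; have -> : k = hi - (hi - k) by lia.
apply: (@nat_up_ind (fun t => P (hi - t)) 0 (hi - lo)); rewrite ?subn0 //; last by lia.
move=> t ht Pt; have -> : hi - t.+1 = (hi - t).-1 by lia.
by apply: PS => //; lia.
Qed.

Definition natdist (i j : nat) : nat := (i - j) + (j - i).

Lemma ell_leq n a b : ell n a b <= n.
Proof. rewrite /ell; lia. Qed.

Section Distance.
Variable n : nat.

(* Place v_i at 2i and w_i at 2i+1 on a line; for [y != z], [dist2 y z] is twice
   the distance from [y] to [z]. *)
Definition vpos (y : Vt n) : nat := 2 * y.2 + y.1.
Definition dist2 (y z : Vt n) : nat := natdist (vpos y) (vpos z) + y.1 + z.1.
Definition tdist (y z : Vt n) : nat := if y == z then 0 else (dist2 y z)./2.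

Lemma dist2_triangle y w z : dist2 y z <= dist2 y w + dist2 w z.
Proof. rewrite /dist2 /natdist; lia. Qed.

Lemma tdistC y z : tdist y z = tdist z y.
Proof. by rewrite /tdist /dist2 /natdist eq_sym; case: eqP => // _; congr _./2; lia. Qed.

Lemma val_vv i : i <= n -> (vv n i).2 = i :> nat.
Proof. by move=> h; rewrite /= inordK // ltnS. Qed.

Lemma val_ww i : i <= n -> (ww n i).2 = i :> nat.
Proof. by move=> h; rewrite /= inordK // ltnS. Qed.

Lemma vpos_vv i : i <= n -> vpos (vv n i) = 2 * i.
Proof. by move=> h; rewrite /vpos val_vv // addn0. Qed.

Lemma vpos_ww i : i <= n -> vpos (ww n i) = 2 * i + 1.
Proof. by move=> h; rewrite /vpos val_ww. Qed.

Lemma Vt_eta (y : Vt n) : y = if y.1 then ww n y.2 else vv n y.2.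
Proof. by case: y => [[] i]; rewrite /vv /ww inord_val. Qed.

Lemma vpos_inj : injective vpos.
Proof.
move=> y z; rewrite /vpos => h.
have h1 : y.1 = z.1 by case: y.1 z.1 h => [] [] /= h //; lia.
have h2 : val y.2 = val z.2 by case: y.1 z.1 h => [] [] /= h //; lia.
by rewrite (Vt_eta y) (Vt_eta z) h1 h2.
Qed.

Lemma tdist_vv i j : i <= n -> j <= n -> tdist (vv n i) (vv n j) = natdist i j.
Proof.
move=> hi hj; rewrite /tdist /dist2 !vpos_vv //= /natdist.
case: eqP => [/(congr1 vpos)|_]; rewrite ?vpos_vv //; lia.
Qed.

Definition natdist_vw (i j : nat) : nat := if i <= j then j.+1 - i else i - j.
Definition natdist_ww (i j : nat) : nat := if i == j then 0 else (natdist i j).+1.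

Lemma tdist_vw i j : i <= n -> j <= n -> tdist (vv n i) (ww n j) = natdist_vw i j.
Proof.
move=> hi hj; rewrite /tdist /dist2 vpos_vv // vpos_ww //= /natdist /natdist_vw.
by case: ifP; lia.
Qed.

Lemma tdist_ww i j : i <= n -> j <= n -> tdist (ww n i) (ww n j) = natdist_ww i j.
Proof.
move=> hi hj; rewrite /tdist /dist2 !vpos_ww //= /natdist_ww /natdist.
case: eqP => [/(congr1 vpos)|ne].
  by rewrite !vpos_ww // => h; rewrite ifT //; apply/eqP; lia.
by rewrite ifF; [lia | apply/eqP => e; apply: ne; rewrite e].
Qed.

Variables a b : nat.
Local Notation l := (ell n a b).

Lemma inI_low i : 0 < i <= a -> inI n a b i.
Proof. by rewrite /inI => ->. Qed.

Lemma inI_high i : l - b <= i < l -> inI n a b i.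
Proof. by move=> h; rewrite /inI; apply/orP; right; apply/andP; split; lia. Qed.

Lemma notin_I_mid i : a < i < l - b -> ~~ inI n a b i.
Proof. by move=> h; rewrite /inI negb_or; apply/andP; split; apply/negP => /andP[? ?]; lia. Qed.

Hypothesis ab_lt_l : a + b < l.
Local Notation VS := (T_vertices n a b).
Local Notation E := (T_edges n a b).

Lemma inI_range i : inI n a b i -> 0 < i < l.
Proof. by rewrite /inI => /orP[] /andP[h1 h2]; lia. Qed.

Lemma mem_T_vertices y :
  (y \in VS) = if y.1 then inI n a b y.2 else 0 < y.2 <= l.
Proof. by rewrite inE; case: y => [[] i] /=; rewrite ?orbF. Qed.

Lemma vv_in_VS j : 0 < j <= l -> vv n j \in VS.
Proof. by move=> hj; rewrite mem_T_vertices /= val_vv //; have hln := ell_leq n a b; lia. Qed.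

Lemma ww_in_VS j : inI n a b j -> ww n j \in VS.
Proof.
move=> hj; have hjl := inI_range hj; have hln := ell_leq n a b.
by rewrite mem_T_vertices /= val_ww //; lia.
Qed.

Lemma mem_T_edges e : e \in E -> exists2 k, 0 < k < l & e = T_edge n a b k.
Proof. by case/mapP => k; rewrite mem_iota => hk ->; exists k => //; lia. Qed.

Lemma mem_T_edge k y : y \in T_edge n a b k ->
  [\/ y = vv n k, inI n a b k /\ y = ww n k | y = vv n k.+1].
Proof.
rewrite /T_edge; case: ifP => hI; rewrite !inE.
  by case/orP=> [/orP[]|] /eqP ->; [apply: Or31 | apply: Or32 | apply: Or33].
by case/orP=> /eqP ->; [apply: Or31 | apply: Or33].
Qed.

Lemma vv_in_T_edge k : vv n k \in T_edge n a b k.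
Proof. by rewrite /T_edge; case: ifP => _; rewrite !inE eqxx. Qed.

Lemma vvS_in_T_edge k : vv n k.+1 \in T_edge n a b k.
Proof. by rewrite /T_edge; case: ifP => _; rewrite !inE eqxx ?orbT. Qed.

Lemma ww_in_T_edge k : inI n a b k -> ww n k \in T_edge n a b k.
Proof. by rewrite /T_edge => ->; rewrite !inE eqxx ?orbT. Qed.

Lemma vpos_T_edge k y : k < l -> y \in T_edge n a b k -> 2 * k <= vpos y <= 2 * k + 2.
Proof.
move=> hk /mem_T_edge hy; have hln := ell_leq n a b.
by case: hy => [->|[_ ->]|->]; rewrite ?vpos_vv ?vpos_ww //; lia.
Qed.

Lemma dist2_T_edge k y z : k < l -> y \in T_edge n a b k -> z \in T_edge n a b k ->
  y != z -> dist2 y z <= 2.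
Proof.
move=> hk hy hz; have hln := ell_leq n a b.
case/mem_T_edge: hy => [->|[_ ->]|->]; case/mem_T_edge: hz => [->|[_ ->]|->];
  rewrite ?eqxx // /dist2 ?vpos_vv ?vpos_ww //= /natdist; lia.
Qed.

Lemma lpath_dist2 u vs es : lpath E u vs es -> u != last u vs ->
  dist2 u (last u vs) <= 2 * size es.
Proof.
case=> hs hu /andP[_ hall] hadj _ hne.
pose y i := nth u (u :: vs) i.
have step i : i < size es -> dist2 (y i) (y i.+1) <= 2.
  move=> hi; have [h1 h2] := hadj i hi.
  have [k hk he] := mem_T_edges (allP hall _ (mem_nth set0 hi)).
  rewrite he in h1 h2; apply: (dist2_T_edge (k := k)) => //; first by lia.
  by rewrite /y nth_uniq //= ?hs; lia.
have hsz : 0 < size es.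
  rewrite lt0n; apply: contraNneq hne => es0.
  by move: hs; rewrite es0 => /size0nil ->; rewrite /= eqxx.
suff /(_ (size es)) : forall i, 0 < i <= size es -> dist2 u (y i) <= 2 * i.
  by rewrite /y -hs -last_nth; apply; rewrite hs leqnn hsz.
apply: nat_up_ind => [|i hi IH]; first exact: step.
by apply: leq_trans (dist2_triangle u (y i) _) _; have := step i ltac:(lia); lia.
Qed.

Section SpinePath.
Variables u v : Vt n.
Hypotheses (hu : u \in VS) (hv : v \in VS) (huv : vpos u < vpos v).

Let k0 : nat := u.2.
Let p := v.2 - k0 + v.1.
Definition spine_vertex i := if i.+1 < p then vv n (k0 + i.+1) else v.
Definition spine_vertices := mkseq spine_vertex p.
Definition spine_edges := mkseq (fun i => T_edge n a b (k0 + i)) p.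

Lemma spine_range :
  [/\ 0 < k0, 0 < p, k0 + p <= l, k0 <= v.2 & 2 * v.2 + v.1 = 2 * (k0 + p) - v.1].
Proof.
move: hu hv huv; rewrite !mem_T_vertices /vpos /p /k0.
case: u.1 v.1 => [] [] /= hu' hv' huv';
  try have := inI_range hu'; try have := inI_range hv'; intros; split; lia.
Qed.

Let nth_spine i : i <= p -> vpos (nth u (u :: spine_vertices) i) =
  if i == 0 then vpos u else if i < p then 2 * (k0 + i) else vpos v.
Proof.
have [_ _ hkp _ _] := spine_range; have hln := ell_leq n a b.
case: i => [|i] //= hi; rewrite nth_mkseq // /spine_vertex.
by case: ifP => // h; rewrite vpos_vv //; lia.
Qed.

Lemma spine_uniq : uniq (u :: spine_vertices).
Proof.
have [_ _ _ _ hv2] := spine_range.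
apply: (@map_uniq _ _ vpos); apply: (sorted_uniq ltn_trans ltnn).
apply/(sortedP 0) => i; rewrite size_map /= size_mkseq => hi.
have sz : size (u :: spine_vertices) = p.+1 by rewrite /= size_mkseq.
change (nth 0 (map vpos (u :: spine_vertices)) i <
        nth 0 (map vpos (u :: spine_vertices)) i.+1).
rewrite !(nth_map u) ?sz ?nth_spine; try lia.
move: huv hv2; rewrite /vpos /k0; by repeat case: ifP => ?; lia.
Qed.

Lemma spine_edges_uniq : uniq spine_edges && all (mem E) spine_edges.
Proof.
have [hk0 hp hkp _ _] := spine_range; have hln := ell_leq n a b.
apply/andP; split.
  rewrite map_inj_in_uniq ?iota_uniq // => i j; rewrite !mem_iota => hi hj he.
  have h1 : vv n (k0 + i) \in T_edge n a b (k0 + j) by rewrite -he vv_in_T_edge.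
  have h2 : vv n (k0 + i).+1 \in T_edge n a b (k0 + j) by rewrite -he vvS_in_T_edge.
  by have := vpos_T_edge _ h1; have := vpos_T_edge _ h2; rewrite ?vpos_vv; lia.
apply/allP => e /mapP [i]; rewrite mem_iota => hi ->.
by apply: map_f; rewrite mem_iota; lia.
Qed.

Lemma spine_vertex_in_edge i : i < p ->
  nth u (u :: spine_vertices) i.+1 \in T_edge n a b (k0 + i).
Proof.
have [_ hp hkp hk01 hv2] := spine_range; move=> hi.
rewrite /= nth_mkseq // /spine_vertex; case: ifP => h.
  by rewrite addnS; apply: vvS_in_T_edge.
move: hv; rewrite mem_T_vertices [v in v \in _]Vt_eta; case: ifP hv2 => hv1 hv2 hvI.
  have e : (v.2 : nat) = k0 + i by lia.
  by rewrite e in hvI *; apply: ww_in_T_edge.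
have e : (v.2 : nat) = (k0 + i).+1 by lia.
by rewrite e; apply: vvS_in_T_edge.
Qed.

Lemma spine_lpath : lpath E u spine_vertices spine_edges.
Proof.
have [hk0 hp hkp _ _] := spine_range.
split; rewrite ?size_mkseq //; [exact: spine_uniq | exact: spine_edges_uniq | |].
- move=> i hi; rewrite nth_mkseq //; split; last exact: spine_vertex_in_edge.
  case: i hi => [|i] hi /=.
    rewrite addn0 (Vt_eta u); move: hu; rewrite mem_T_vertices.
    by case: ifP => _ hI; [apply: ww_in_T_edge | apply: vv_in_T_edge].
  by rewrite nth_mkseq ?/spine_vertex ?ifT ?addnS; [apply: vv_in_T_edge | lia | lia].
- move=> i j hij hj; rewrite !nth_mkseq; try lia.
  rewrite disjoints_subset; apply/subsetP => y h1; rewrite inE; apply/negP => h2.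
  by have := vpos_T_edge _ h1; have := vpos_T_edge _ h2; lia.
Qed.

Lemma spine_last : last u spine_vertices = v.
Proof.
have [_ hp _ _ _] := spine_range.
rewrite (last_nth u) size_mkseq -(prednK hp) /= nth_mkseq ?prednK //.
by rewrite /spine_vertex ifF //; lia.
Qed.

Lemma size_spine_edges : size spine_edges = tdist u v.
Proof.
have [_ _ _ _ hv2] := spine_range.
rewrite size_mkseq /tdist ifF; last by apply/eqP => e; move: huv; rewrite e ltnn.
move: hv2 huv; rewrite /dist2 /natdist /vpos -/k0 -/p.
by case: (u.1); case: (v.1) => /=; lia.
Qed.

End SpinePath.

Lemma tdist_lpath u v : u \in VS -> v \in VS ->
  exists vs es, [/\ lpath E u vs es, last u vs = v & size es = tdist u v].
Proof.
move=> hu hv; case: (ltngtP (vpos u) (vpos v)) => huv.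
- by exists (spine_vertices u v), (spine_edges u v);
    split; [exact: spine_lpath hu hv huv | exact: spine_last hu hv huv |
     exact: size_spine_edges hu hv huv].
- have [] := lpath_rev (spine_lpath hv hu huv); rewrite (spine_last hv hu huv) => hp hl.
  exists (rev (belast v (spine_vertices v u))), (rev (spine_edges v u)).
  by rewrite size_rev (size_spine_edges hv hu huv) tdistC.
- by move/vpos_inj: huv => <-; exists [::], [::]; rewrite /tdist eqxx.
Qed.

Lemma T_distanceE D : distance_matrix VS E D -> {in VS &, D =2 tdist}.
Proof.
move=> hD u v hu hv; have [[vs [es [hp hl hs]]] hmin] := hD u v hu hv.
apply/eqP; rewrite eqn_leq; apply/andP; split.
  by have [vs' [es' [h1 h2 <-]]] := tdist_lpath hu hv; exact: hmin h1 h2.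
rewrite -hs -hl /tdist; case: eqP => // /eqP hne.
by have := lpath_dist2 hp hne; lia.
Qed.

End Distance.

Arguments inI_low {n a b i}.

Local Open Scope ring_scope.

Section NatWeightedSums.
Variables (R : pzRingType) (F : nat -> R) (lo hi : nat).

Lemma sum_natD (f g : nat -> nat) : \sum_(lo <= j < hi) (f j + g j)%:R * F j =
  \sum_(lo <= j < hi) (f j)%:R * F j + \sum_(lo <= j < hi) (g j)%:R * F j.
Proof. by rewrite -big_split; apply: eq_bigr => j _; rewrite natrD mulrDl. Qed.

Lemma sum_natM (c : nat) (f : nat -> nat) : \sum_(lo <= j < hi) (c * f j)%:R * F j =
  c%:R * \sum_(lo <= j < hi) (f j)%:R * F j.
Proof. by rewrite mulr_sumr; apply: eq_bigr => j _; rewrite natrM mulrA. Qed.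

Lemma sum_nat1 : \sum_(lo <= j < hi) 1%N%:R * F j = \sum_(lo <= j < hi) F j.
Proof. by apply: eq_bigr => j _; rewrite mul1r. Qed.

Lemma eq_sum_nat (f g : nat -> nat) : (forall j, (lo <= j < hi)%N -> f j = g j) ->
  \sum_(lo <= j < hi) (f j)%:R * F j = \sum_(lo <= j < hi) (g j)%:R * F j.
Proof. by move=> h; apply: eq_big_nat => j hj; rewrite h. Qed.

Lemma sum_nat_delta k : (lo <= k < hi)%N ->
  \sum_(lo <= j < hi) (j == k : nat)%:R * F j = F k.
Proof.
move=> hk; rewrite (bigD1_seq k) ?mem_index_iota ?iota_uniq //= eqxx mul1r.
by rewrite big1 ?addr0 // => j /negbTE ->; rewrite mul0r.
Qed.

Lemma sum_nat_mask lo' hi' : (lo <= lo' <= hi')%N -> (hi' <= hi)%N ->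
  \sum_(lo <= k < hi) (if (lo' <= k < hi')%N then F k else 0) = \sum_(lo' <= k < hi') F k.
Proof.
move=> /andP[h1 h1'] h2.
rewrite (big_cat_nat h1 (leq_trans h1' h2)) (big_cat_nat h1' h2) /=.
rewrite big_nat_cond big1 ?add0r; last by move=> k /andP[/andP[_ ?] _]; rewrite ifF //; lia.
rewrite [X in _ + X]big_nat_cond [X in _ + X]big1 ?addr0; last first.
  by move=> k /andP[/andP[? _] _]; rewrite ifF //; lia.
by apply: eq_big_nat => k ->.
Qed.

End NatWeightedSums.

Definition dist_gap {R : pzRingType} (d : nat -> nat -> nat) (p q j : nat) : R :=
  (d q j)%:R - (d p j)%:R.

Section EigenEquations.
Variables (R : realFieldType) (n a b : nat).
Hypothesis ab_lt_l : (a + b < ell n a b)%N.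
Local Notation l := (ell n a b).
Local Notation VS := (T_vertices n a b).
Local Notation E := (T_edges n a b).

Lemma sum_T_vertices (F : Vt n -> R) : \sum_(y in VS) F y =
  \sum_(1 <= j < l.+1) F (vv n j) + \sum_(1 <= j < l) (if inI n a b j then F (ww n j) else 0).
Proof.
have hln := ell_leq n a b.
rewrite big_mkcond /=.
have -> : \sum_(y : Vt n) (if y \in VS then F y else 0) =
    \sum_(i : bool) \sum_(j : 'I_n.+1) (if (i, j) \in VS then F (i, j) else 0).
  by rewrite pair_big; apply: eq_bigr => -[i j].
rewrite big_bool /= addrC; congr (_ + _).
  rewrite -(@sum_nat_mask _ (fun j => F (vv n j)) 0 n.+1) ?big_mkord; try lia.
  by apply: eq_bigr => j _; rewrite mem_T_vertices /vv inord_val ltnS.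
rewrite -(@sum_nat_mask _ (fun j => if inI n a b j then F (ww n j) else 0) 0 n.+1)
  ?big_mkord; try lia.
apply: eq_bigr => j _; rewrite mem_T_vertices /ww inord_val /=.
by case: ifP => h; case: ifP => h' //; have := inI_range ab_lt_l h; lia.
Qed.

Variables (D : Vt n -> Vt n -> nat) (x : Vt n -> R) (rho : R).
Hypothesis hD : distance_matrix VS E D.
Hypothesis heig : forall u, u \in VS -> \sum_(w in VS) (D u w)%:R * x w = rho * x u.

Definition xv j := x (vv n j).
Definition xw j := if inI n a b j then x (ww n j) else 0.
Definition xsum := \sum_(1 <= j < l.+1) xv j + \sum_(1 <= j < l) xw j.

Let vv_VS := vv_in_VS ab_lt_l.
Let ww_VS := ww_in_VS ab_lt_l.
Let DE := T_distanceE ab_lt_l hD.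

Lemma xv_eigen k : (0 < k <= l)%N -> rho * xv k =
  \sum_(1 <= j < l.+1) (natdist k j)%:R * xv j + \sum_(1 <= j < l) (natdist_vw k j)%:R * xw j.
Proof.
move=> hk; have hln := ell_leq n a b.
rewrite /xv -heig ?vv_VS // sum_T_vertices; congr (_ + _).
  by apply: eq_big_nat => j hj; rewrite DE ?vv_VS ?tdist_vv //; lia.
apply: eq_big_nat => j hj; rewrite /xw; case: ifP => h; last by rewrite mulr0.
by rewrite DE ?vv_VS ?ww_VS ?tdist_vw //; lia.
Qed.

Lemma xw_eigen k : inI n a b k -> rho * xw k =
  \sum_(1 <= j < l.+1) (natdist_vw j k)%:R * xv j + \sum_(1 <= j < l) (natdist_ww k j)%:R * xw j.
Proof.
move=> hk; have hln := ell_leq n a b; have hkl := inI_range ab_lt_l hk.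
rewrite /xw hk -heig ?ww_VS // sum_T_vertices; congr (_ + _).
  by apply: eq_big_nat => j hj; rewrite DE ?vv_VS ?ww_VS // tdistC tdist_vw //; lia.
apply: eq_big_nat => j hj; case: ifP => h; last by rewrite mulr0.
by rewrite DE ?ww_VS ?tdist_ww //; lia.
Qed.

(* Second differences of distances along the spine are supported on the diagonal. *)
Lemma xv_rec k : (2 <= k < l)%N ->
  rho * (xv k.+1 + xv k.-1) = 2 * rho * xv k + 2 * xv k + xw k.-1 + xw k.
Proof.
move=> hk.
have e1 := xv_eigen (k := k.+1) ltac:(lia); have e2 := xv_eigen (k := k.-1) ltac:(lia).
have e3 := xv_eigen (k := k) ltac:(lia).
have s1 : \sum_(1 <= j < l.+1) (natdist k.+1 j)%:R * xv j +
          \sum_(1 <= j < l.+1) (natdist k.-1 j)%:R * xv j =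
          2 * \sum_(1 <= j < l.+1) (natdist k j)%:R * xv j + 2 * xv k.
  rewrite -sum_natD (eq_sum_nat _ (g := fun j => 2 * natdist k j + 2 * (j == k))%N); last first.
    by move=> j hj; rewrite /natdist; case: eqP => [->|ne] /=; lia.
  by rewrite /= sum_natD /= !sum_natM sum_nat_delta //; lia.
have s2 : \sum_(1 <= j < l) (natdist_vw k.+1 j)%:R * xw j +
          \sum_(1 <= j < l) (natdist_vw k.-1 j)%:R * xw j =
          2 * \sum_(1 <= j < l) (natdist_vw k j)%:R * xw j + xw k.-1 + xw k.
  rewrite -sum_natD
    (eq_sum_nat _ (g := fun j => 2 * natdist_vw k j + (j == k.-1) + (j == k))%N); last first.
    by move=> j hj; rewrite /natdist_vw; case: eqP => [->|ne]; case: eqP => [e|ne'];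
      repeat case: ifP; lia.
  by rewrite /= sum_natD sum_natD /= sum_natM /= !sum_nat_delta //; lia.
rewrite -[2 * rho * xv k]mulrA mulrDr e1 e2 e3; lra.
Qed.

Lemma xw_rec k : inI n a b k ->
  2 * rho * xw k + 3 * xw k = rho * (xv k + xv k.+1) + xsum.
Proof.
move=> hk; have hkl := inI_range ab_lt_l hk.
have e1 := xw_eigen hk; have e2 := xv_eigen (k := k) ltac:(lia).
have e3 := xv_eigen (k := k.+1) ltac:(lia).
have s1 : 2 * \sum_(1 <= j < l.+1) (natdist_vw j k)%:R * xv j =
    \sum_(1 <= j < l.+1) (natdist k j)%:R * xv j +
    \sum_(1 <= j < l.+1) (natdist k.+1 j)%:R * xv j + \sum_(1 <= j < l.+1) xv j.
  rewrite -sum_natM -sum_natD -(sum_nat1 xv) -sum_natD; apply: eq_sum_nat => j hj.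
  by rewrite /natdist_vw /natdist; case: ifP; lia.
have s2 : 2 * \sum_(1 <= j < l) (natdist_ww k j)%:R * xw j + 3 * xw k =
    \sum_(1 <= j < l) (natdist_vw k j)%:R * xw j +
    \sum_(1 <= j < l) (natdist_vw k.+1 j)%:R * xw j + \sum_(1 <= j < l) xw j.
  rewrite -(@sum_nat_delta _ xw 1 l k); last by lia.
  rewrite -sum_natM -sum_natM -sum_natD -(sum_nat1 xw) -!sum_natD; apply: eq_sum_nat => j hj.
  by rewrite /natdist_vw /natdist_ww /natdist; case: eqP => [->|ne]; repeat case: ifP; lia.
rewrite /xsum -[2 * rho * xw k]mulrA mulrDr e1 e2 e3; lra.
Qed.

Lemma xv_rec_first : (1 < l)%N -> rho * (xv 2 - xv 1) = 2 * xv 1 + xw 1 - xsum.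
Proof.
move=> hl; have e1 := xv_eigen (k := 2) ltac:(lia); have e2 := xv_eigen (k := 1) ltac:(lia).
have s1 : \sum_(1 <= j < l.+1) (natdist 2 j)%:R * xv j + \sum_(1 <= j < l.+1) xv j =
    \sum_(1 <= j < l.+1) (natdist 1 j)%:R * xv j + 2 * xv 1.
  rewrite -(sum_nat1 xv) -sum_natD -(@sum_nat_delta _ xv 1 l.+1 1); last by lia.
  rewrite -sum_natM -sum_natD; apply: eq_sum_nat => j hj.
  by rewrite /natdist; case: eqP => [->|ne] /=; lia.
have s2 : \sum_(1 <= j < l) (natdist_vw 2 j)%:R * xw j + \sum_(1 <= j < l) xw j =
    \sum_(1 <= j < l) (natdist_vw 1 j)%:R * xw j + xw 1.
  rewrite -(sum_nat1 xw) -sum_natD -(@sum_nat_delta _ xw 1 l 1); last by lia.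
  rewrite -sum_natD; apply: eq_sum_nat => j hj.
  by rewrite /natdist_vw; case: eqP => [->|ne] /=; repeat case: ifP; lia.
rewrite /xsum mulrBr e1 e2; lra.
Qed.

Lemma xv_rec_last : (1 < l)%N -> rho * (xv l.-1 - xv l) = 2 * xv l + xw l.-1 - xsum.
Proof.
move=> hl; have e1 := xv_eigen (k := l.-1) ltac:(lia); have e2 := xv_eigen (k := l) ltac:(lia).
have s1 : \sum_(1 <= j < l.+1) (natdist l.-1 j)%:R * xv j + \sum_(1 <= j < l.+1) xv j =
    \sum_(1 <= j < l.+1) (natdist l j)%:R * xv j + 2 * xv l.
  rewrite -(sum_nat1 xv) -sum_natD -(@sum_nat_delta _ xv 1 l.+1 l); last by lia.
  rewrite -sum_natM -sum_natD; apply: eq_sum_nat => j hj.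
  by rewrite /natdist; case: eqP => [->|ne] /=; lia.
have s2 : \sum_(1 <= j < l) (natdist_vw l.-1 j)%:R * xw j + \sum_(1 <= j < l) xw j =
    \sum_(1 <= j < l) (natdist_vw l j)%:R * xw j + xw l.-1.
  rewrite -(sum_nat1 xw) -sum_natD -(@sum_nat_delta _ xw 1 l l.-1); last by lia.
  rewrite -sum_natD; apply: eq_sum_nat => j hj.
  by rewrite /natdist_vw; case: eqP => [->|ne] /=; repeat case: ifP; lia.
rewrite /xsum mulrBr e1 e2; lra.
Qed.

Lemma xv_diff_weighted p q : (0 < p <= l)%N -> (0 < q <= l)%N ->
  rho * (xv q - xv p) =
    \sum_(1 <= j < l.+1) dist_gap natdist p q j * xv j +
    \sum_(1 <= e < l) dist_gap natdist_vw p q e * xw e.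
Proof.
move=> hp hq; rewrite mulrBr (xv_eigen hp) (xv_eigen hq) /dist_gap.
under [X in _ = X + _]eq_bigr do rewrite mulrBl.
under [X in _ = _ + X]eq_bigr do rewrite mulrBl.
rewrite !sumrB; lra.
Qed.

Hypothesis x_gt0 : {in VS, forall u, 0 < x u}.

Lemma xv_gt0 j : (0 < j <= l)%N -> 0 < xv j.
Proof. by move=> hj; apply/x_gt0/vv_VS. Qed.

Lemma xw_ge0 j : 0 <= xw j.
Proof. by rewrite /xw; case: ifP => // h; apply/ltW/x_gt0/ww_VS. Qed.

Lemma eigen_gt0 : (1 < l)%N -> 0 < rho.
Proof.
move=> hl; have := xv_eigen (k := 1) ltac:(lia).
have s1 : xv 2 <= \sum_(1 <= j < l.+1) (natdist 1 j)%:R * xv j.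
  rewrite -(@sum_nat_delta _ xv 1 l.+1 2); last by lia.
  apply: ler_sum_nat => j hj; apply: ler_wpM2r; first by apply/ltW/xv_gt0; lia.
  by rewrite ler_nat /natdist; case: eqP => /= ?; lia.
have s2 : 0 <= \sum_(1 <= j < l) (natdist_vw 1 j)%:R * xw j.
  by rewrite big_seq; apply: sumr_ge0 => j _; apply: mulr_ge0 => //; apply: xw_ge0.
have h1 := xv_gt0 (j := 1) ltac:(lia); have h2 := xv_gt0 (j := 2) ltac:(lia).
nra.
Qed.

End EigenEquations.

Lemma argmin_nat (R : realDomainType) (F : nat -> R) lo hi : (lo <= hi)%N ->
  exists2 j, (lo <= j <= hi)%N & forall k, (lo <= k <= hi)%N -> F j <= F k.
Proof.
move=> h; elim: hi h => [|hi IH] h.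
  by exists lo => [|k hk]; [lia | have -> : k = lo by lia].
case: (eqVneq lo hi.+1) => [<-|hne].
  by exists lo => [|k hk]; [lia | have -> : k = lo by lia].
have [j hj hm] := IH ltac:(lia).
have [hle|hlt] := lerP (F j) (F hi.+1).
  exists j => [|k hk]; first lia.
  by case: (eqVneq k hi.+1) => [->|hk'] //; apply: hm; lia.
exists hi.+1 => [|k hk]; first lia.
case: (eqVneq k hi.+1) => [->|hk'] //.
by apply: le_trans (ltW hlt) (hm k _); lia.
Qed.

Lemma sum_nat_ge0_mirror (R : realFieldType) (F : nat -> R) lo hi :
  (forall j, (lo <= j < hi)%N -> 0 <= F j + F (lo + hi - j.+1)%N) ->
  0 <= \sum_(lo <= j < hi) F j.
Proof.
move=> h; suff : 0 <= 2 * \sum_(lo <= j < hi) F j by rewrite pmulr_rge0.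
have -> : 2 * \sum_(lo <= j < hi) F j = \sum_(lo <= j < hi) F j + \sum_(lo <= j < hi) F j.
  by rewrite mulrDl mul1r.
rewrite [X in _ + X]big_nat_rev -big_split big_seq_cond /=.
by apply: sumr_ge0 => j /andP[hj _]; apply: h; rewrite mem_index_iota in hj.
Qed.

Section Recurrence.
Variables (R : realFieldType) (n a b : nat).
Hypotheses (a2_le_b : (a + 2 <= b)%N) (b2_lt_l : (2 * b < ell n a b)%N).
Local Notation l := (ell n a b).
Local Notation inI := (inI n a b).
Local Notation m := (l./2).
Variables (U W : nat -> R) (rho S : R).
Hypothesis rho_gt0 : 0 < rho.
Hypothesis U_gt0 : forall j, (0 < j <= l)%N -> 0 < U j.
Hypothesis W_gt0 : forall j, inI j -> 0 < W j.
Hypothesis W_eq0 : forall j, ~~ inI j -> W j = 0.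
Hypothesis U_rec : forall k, (2 <= k < l)%N ->
  rho * (U k.+1 + U k.-1) = 2 * rho * U k + 2 * U k + W k.-1 + W k.
Hypothesis W_rec : forall k, inI k -> 2 * rho * W k + 3 * W k = rho * (U k + U k.+1) + S.
Hypothesis U_rec_first : rho * (U 2 - U 1) = 2 * U 1 + W 1 - S.
Hypothesis U_rec_last : rho * (U l.-1 - U l) = 2 * U l + W l.-1 - S.

Lemma W_ge0 j : 0 <= W j.
Proof. by case: (boolP (inI j)) => h; [apply/ltW/W_gt0 | rewrite W_eq0]. Qed.

(* [l.+1 - j] and [l - e] index the mirror images of v_j and w_e. *)
Definition skewv j := U j - U (l.+1 - j).
Definition skeww e := W e - W (l - e).

Lemma skewv_rec j : (2 <= j <= m)%N ->
  rho * (skewv j.+1 + skewv j.-1) = 2 * rho * skewv j + 2 * skewv j + skeww j.-1 + skeww j.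
Proof.
move=> hj; have o1 := U_rec (k := j) ltac:(lia); have o2 := U_rec (k := l.+1 - j) ltac:(lia).
set k := (l.+1 - j)%N in o2.
have e1 : skewv j.+1 = U j.+1 - U k.-1 by rewrite /skewv; congr (_ - U _); lia.
have e2 : skewv j.-1 = U j.-1 - U k.+1 by rewrite /skewv; congr (_ - U _); lia.
have e3 : skeww j.-1 = W j.-1 - W k by rewrite /skeww; congr (_ - W _); lia.
have e4 : skeww j = W j - W k.-1 by rewrite /skeww; congr (_ - W _); lia.
rewrite e1 e2 e3 e4 /skewv -/k; lra.
Qed.

Lemma skewv_rec_first : rho * (skewv 2 - skewv 1) = 2 * skewv 1 + skeww 1.
Proof.
rewrite /skewv /skeww; have -> : (l.+1 - 2 = l.-1)%N by lia.
have -> : (l.+1 - 1 = l)%N by lia.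
have -> : (l - 1 = l.-1)%N by lia.
by move: U_rec_first U_rec_last; rewrite !mulrBr; lra.
Qed.

Lemma skeww_low e : (0 < e <= a)%N -> (2 * rho + 3) * skeww e = rho * (skewv e + skewv e.+1).
Proof.
move=> he; have w1 := W_rec (inI_low he).
have hI : inI (l - e) by apply: inI_high; lia.
have w2 := W_rec hI.
have e1 : (l - e).+1 = (l.+1 - e)%N by lia.
have e2 : (l.+1 - e.+1 = l - e)%N by lia.
rewrite e1 in w2; rewrite /skewv /skeww e2.
by move: w1 w2; rewrite !mulrDl !mulrDr; lra.
Qed.

Lemma skeww_le0 e : (a < e)%N -> (2 * e <= l)%N -> skeww e <= 0.
Proof.
move=> h1 h2; rewrite /skeww W_eq0 ?sub0r ?oppr_le0 ?W_ge0 //.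
by apply: notin_I_mid; lia.
Qed.

Lemma skeww_lt0 : skeww a.+1 < 0.
Proof.
rewrite /skeww W_eq0 ?sub0r ?oppr_lt0; last by apply: notin_I_mid; lia.
by apply/W_gt0/inI_high; lia.
Qed.

Lemma skewv_half : skewv m.+1 = 0 \/ skewv m.+1 = - skewv m.
Proof.
rewrite /skewv; have [hl|hl] : l = m.*2 \/ l = m.*2.+1 by lia.
  have e1 : (l.+1 - m.+1 = m)%N by lia.
  have e2 : (l.+1 - m = m.+1)%N by lia.
  by right; rewrite e1 e2 opprB.
have e : (l.+1 - m.+1 = m.+1)%N by lia.
by left; rewrite e subrr.
Qed.

Lemma skeww_bound e mu : (0 < e)%N -> (2 * e <= l)%N -> mu <= 0 ->
  mu <= skewv e -> mu <= skewv e.+1 ->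
  (2 * rho + 3) * skeww e <= rho * (skewv e + skewv e.+1 - 2 * mu).
Proof.
move=> h1 h2 hmu he he1; have hr := rho_gt0.
case: (leqP e a) => hea; first by rewrite skeww_low; [nra | lia].
by have := skeww_le0 hea h2; nra.
Qed.

Section MinimumPrinciple.
Variables (mu : R) (j : nat).
Hypotheses (hj : (0 < j <= m)%N) (hmu : mu <= 0) (hA : skewv j = mu).
Hypothesis skewv_ge_mu : forall k, (0 < k <= m)%N -> mu <= skewv k.

Let skewv_succ_ge_mu : mu <= skewv j.+1.
Proof.
case: (ltnP j m) => hjm; first by apply: skewv_ge_mu; lia.
have hmu' := hmu; move: hA; have -> : j = m by lia.
by case: skewv_half => -> hAm; lra.
Qed.

Let skeww_le k : (0 < k <= m)%N -> mu <= skewv k -> mu <= skewv k.+1 ->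
  skeww k <= rho * (skewv k + skewv k.+1 - 2 * mu) /\
  (2 * rho + 3) * skeww k <= rho * (skewv k + skewv k.+1 - 2 * mu).
Proof.
move=> hk h1 h2; have hr := rho_gt0; have hmu' := hmu.
have hb : (2 * rho + 3) * skeww k <= rho * (skewv k + skewv k.+1 - 2 * mu).
  by apply: skeww_bound => //; lia.
by split => //; nra.
Qed.

Let skewv_min_interior : (1 < j)%N ->
  [/\ mu = 0, skewv j.+1 = 0, skewv j.-1 = 0 & skeww j = 0].
Proof.
move=> hj2; have hr := rho_gt0; have hmu' := hmu.
have r := skewv_rec (j := j) ltac:(lia).
have h1 := skewv_ge_mu (k := j.-1) ltac:(lia).
have h2 := skewv_succ_ge_mu.
have [c1 b1] := skeww_le (k := j.-1) ltac:(lia) h1 (skewv_ge_mu (k := j.-1.+1) ltac:(lia)).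
have [c2 b2] := skeww_le (k := j) hj (skewv_ge_mu hj) h2.
rewrite prednK ?hA in c1 b1; last by lia.
rewrite hA in c2 b2 r.
have mu0 : mu = 0 by nra.
rewrite mu0 in b1 b2 r h1 h2 *.
have hsum : rho * skewv j.-1 + rho * skewv j.+1 = 0 by nra.
have hm : skewv j.-1 = 0 by nra.
have hp : skewv j.+1 = 0 by nra.
by split => //; rewrite hm hp in b1 b2 r; nra.
Qed.

Let skewv_min_first : j = 1%N -> [/\ mu = 0, skewv 2 = 0 & skeww 1 = 0].
Proof.
move=> j1; have hr := rho_gt0; have hmu' := hmu; have hA' := hA; rewrite j1 in hA'.
have r := skewv_rec_first; have h2 := skewv_succ_ge_mu; rewrite j1 in h2.
have [c1 b1] := skeww_le (k := 1) ltac:(lia) (skewv_ge_mu (k := 1) ltac:(lia)) h2.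
rewrite hA' in r c1 b1.
have mu0 : mu = 0 by nra.
rewrite mu0 in b1 r h2 *.
have hA2 : skewv 2 = 0 by nra.
by split => //; rewrite hA2 in b1 r; nra.
Qed.

Lemma skewv_min_flat :
  [/\ mu = 0, skewv j.+1 = mu, (1 < j)%N -> skewv j.-1 = mu & skeww j = 0].
Proof.
case: (ltnP 1 j) => hj2.
  by have [-> -> -> ->] := skewv_min_interior hj2.
have j1 : j = 1%N by lia.
by have [-> e2 e3] := skewv_min_first j1; rewrite j1 e2 e3.
Qed.

End MinimumPrinciple.

(* A discrete minimum principle: a nonpositive minimum of [skewv] propagates to
   all of [1, m], forcing [skeww (a.+1) = 0], which is impossible. *)
Lemma skewv_gt0 i : (0 < i <= m)%N -> 0 < skewv i.
Proof.
have [jm hjm hmin] := @argmin_nat _ skewv 1 m ltac:(lia).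
suff : 0 < skewv jm by move=> h hi; apply: lt_le_trans h (hmin _ hi).
rewrite ltNge; apply/negP => hmu.
have flat k : (0 < k <= m)%N -> skewv k = skewv jm ->
    [/\ skewv jm = 0, skewv k.+1 = skewv jm, (1 < k)%N -> skewv k.-1 = skewv jm
      & skeww k = 0].
  by move=> hk hk'; apply: skewv_min_flat => // k' hk''; rewrite -hk'; apply: hmin.
have hall k : (0 < k <= m)%N -> skewv k = skewv jm.
  move=> hk; case: (leqP jm k) => h.
    apply: (@nat_up_ind (fun k => skewv k = skewv jm) jm m) => //; last by lia.
    by move=> k' hk' /(flat k' ltac:(lia)) [].
  apply: (@nat_down_ind (fun k => skewv k = skewv jm) 1 jm) => //; last by lia.
  by move=> k' hk' /(flat k' ltac:(lia)) [_ _ /(_ ltac:(lia))].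
have [_ _ _ hB] := flat a.+1 ltac:(lia) (hall a.+1 ltac:(lia)).
by have := skeww_lt0; rewrite hB ltxx.
Qed.

Lemma skeww_gt0 e : (0 < e <= a)%N -> 0 < skeww e.
Proof.
move=> he; have hr := rho_gt0.
have h1 := skewv_gt0 (i := e) ltac:(lia); have h2 := skewv_gt0 (i := e.+1) ltac:(lia).
by have := skeww_low he; nra.
Qed.

Lemma skewv_lt_succ i : (0 < i <= a)%N -> skewv i < skewv i.+1.
Proof.
move=> hi; have ha : (0 < a)%N by lia.
have hr := rho_gt0; move: i hi.
apply: (@nat_up_ind (fun i => skewv i < skewv i.+1) 1 a) => [|k hk IH].
  have r := skewv_rec_first; have h1 := skewv_gt0 (i := 1) ltac:(lia).
  by have h2 := skeww_gt0 (e := 1) ltac:(lia); nra.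
have r := skewv_rec (j := k.+1) ltac:(lia); rewrite /= in r.
have h1 := skewv_gt0 (i := k.+1) ltac:(lia).
have h2 := skeww_gt0 (e := k) ltac:(lia); have h3 := skeww_gt0 (e := k.+1) ltac:(lia).
nra.
Qed.

Lemma skeww_lt_skewv_succ i : (0 < i <= a)%N -> skeww i < skewv i.+1.
Proof.
move=> hi; have hr := rho_gt0.
have h1 := skewv_lt_succ hi; have h2 := skewv_gt0 (i := i) ltac:(lia).
by have := skeww_low hi; nra.
Qed.

Lemma U_convex k : (2 <= k < l)%N -> U k - U k.-1 < U k.+1 - U k.
Proof.
move=> hk; have hr := rho_gt0; have o := U_rec hk.
have h1 := U_gt0 (j := k) ltac:(lia); have h2 := W_ge0 k.-1; have h3 := W_ge0 k.
nra.
Qed.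

Lemma U_decreasing j : (0 < j <= m)%N -> U j.+1 < U j.
Proof.
have base : U m.+1 < U m.
  have := skewv_gt0 (i := m) ltac:(lia); rewrite /skewv.
  have [hl|hl] : l = m.*2 \/ l = m.*2.+1 by lia.
    have -> : (l.+1 - m = m.+1)%N by lia.
    lra.
  have -> : (l.+1 - m = m.+2)%N by lia.
  by have := U_convex (k := m.+1) ltac:(lia); rewrite /=; lra.
move: j; apply: (@nat_down_ind (fun j => U j.+1 < U j) 1 m) => // k hk IH.
have e : k.-1.+1 = k by lia.
rewrite e; have := U_convex (k := k) ltac:(lia); lra.
Qed.

Local Notation c := ((l - b - a - 1)./2).

(* Reflection of the stretch v_(a+1), ..., v_(l-b+1), which carries no pendant w. *)
Definition skewm i := U (a + 1 + i) - U (l - b + 1 - i).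

Lemma skewm_rec i : (2 <= i <= c)%N ->
  rho * (skewm i.-1 + skewm i.+1) = 2 * rho * skewm i + 2 * skewm i.
Proof.
move=> hi.
have o1 := U_rec (k := a + 1 + i) ltac:(lia); have o2 := U_rec (k := l - b + 1 - i) ltac:(lia).
rewrite !W_eq0 in o1 o2; try (apply: notin_I_mid; lia).
have e1 : skewm i.-1 = U (a + 1 + i).-1 - U (l - b + 1 - i).+1.
  by rewrite /skewm; congr (U _ - U _); lia.
have e2 : skewm i.+1 = U (a + 1 + i).+1 - U (l - b + 1 - i).-1.
  by rewrite /skewm; congr (U _ - U _); lia.
rewrite e1 e2 /skewm; lra.
Qed.

Lemma skewm_center : 0 < skewm c /\ skewm c.+1 <= 0.
Proof.
rewrite /skewm; have e3 : (a + 1 + c.+1 = (a + 1 + c).+1)%N by lia.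
rewrite e3; have u1 := U_decreasing (j := a + 1 + c) ltac:(lia).
have [hd|hd] : (l - b - a - 1 = c.*2 \/ l - b - a - 1 = c.*2.+1)%N by lia.
  have e1 : (l - b + 1 - c = (a + 1 + c).+1)%N by lia.
  have e2 : (l - b + 1 - c.+1 = a + 1 + c)%N by lia.
  by rewrite e1 e2; split; lra.
have e1 : (l - b + 1 - c = (a + 1 + c).+2)%N by lia.
have e2 : (l - b + 1 - c.+1 = (a + 1 + c).+1)%N by lia.
have u2 := U_decreasing (j := (a + 1 + c).+1) ltac:(lia).
by rewrite e1 e2; split; lra.
Qed.

Lemma skewm_decreasing i : (0 < i <= c)%N -> 0 < skewm i /\ skewm i.+1 < skewm i.
Proof.
have hr := rho_gt0; have [g1 g2] := skewm_center.
move: i; apply: (@nat_down_ind (fun i => 0 < skewm i /\ skewm i.+1 < skewm i) 1 c).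
  by split; lra.
move=> k hk [h1 h2]; have r := skewm_rec (i := k) ltac:(lia).
have e : k.-1.+1 = k by lia.
by rewrite e; split; nra.
Qed.

Local Notation p := (l - b + 1)%N.
Local Notation q := (l - a)%N.
Local Notation k0 := ((p + q - 1)./2).

(* The reflection of the stretch v_p, ..., v_q, all of whose edges carry a pendant w. *)
Definition skewr k := U k - U (p + q - k).

Lemma skewr_W i : (p <= i < q)%N ->
  (2 * rho + 3) * (W i - W (p + q - i.+1)) = rho * (skewr i + skewr i.+1).
Proof.
move=> hi; have hI : inI i by apply: inI_high; lia.
have hI' : inI (p + q - i.+1) by apply: inI_high; lia.
have w1 := W_rec hI; have w2 := W_rec hI'.
have e1 : (p + q - i.+1).+1 = (p + q - i)%N by lia.
rewrite e1 in w2; rewrite /skewr.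
by move: w1 w2; rewrite ?mulrDl ?mulrDr ?mulrBr; lra.
Qed.

Lemma skewr_rec k : (p < k <= k0)%N ->
  (2 * rho * rho + 2 * rho) * (skewr k.-1 + skewr k.+1) =
  (4 * rho * rho + 12 * rho + 6) * skewr k.
Proof.
move=> hk.
have o1 := U_rec (k := k) ltac:(lia); have o2 := U_rec (k := p + q - k) ltac:(lia).
have w1 := skewr_W (i := k.-1) ltac:(lia); have w2 := skewr_W (i := k) ltac:(lia).
have ek : k.-1.+1 = k by lia.
have ek' : (p + q - k).-1 = (p + q - k.+1)%N by lia.
rewrite ek in w1; rewrite ek' in o2.
have e1 : skewr k.-1 = U k.-1 - U (p + q - k).+1 by rewrite /skewr; congr (_ - U _); lia.
have e2 : skewr k.+1 = U k.+1 - U (p + q - k.+1) by [].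
have o12 : rho * (skewr k.+1 + skewr k.-1) = (2 * rho + 2) * skewr k +
    (W k.-1 - W (p + q - k)) + (W k - W (p + q - k.+1)).
  by rewrite e1 e2 /skewr; move: o1 o2; rewrite ?mulrDr ?mulrDl; lra.
have o3 : (2 * rho + 3) * (rho * (skewr k.+1 + skewr k.-1)) =
    (2 * rho + 3) * (2 * rho + 2) * skewr k + (2 * rho + 3) * (W k.-1 - W (p + q - k)) +
    (2 * rho + 3) * (W k - W (p + q - k.+1)) by rewrite o12; ring.
rewrite w1 w2 in o3; nra.
Qed.

Lemma skewr_half : skewr k0.+1 = 0 \/ skewr k0.+1 = - skewr k0.
Proof.
rewrite /skewr; have [hd|hd] : (p + q - 1 = k0.*2 \/ p + q - 1 = k0.*2.+1)%N by lia.
  have e1 : (p + q - k0.+1 = k0)%N by lia.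
  have e2 : (p + q - k0 = k0.+1)%N by lia.
  by right; rewrite e1 e2 opprB.
have e : (p + q - k0.+1 = k0.+1)%N by lia.
by left; rewrite e subrr.
Qed.

Lemma skewr_step k : (p < k <= k0)%N ->
  (0 <= skewr k -> skewr k.+1 <= skewr k -> 0 <= skewr k.-1 /\ skewr k <= skewr k.-1) /\
  (skewr k < 0 -> skewr k < skewr k.+1 -> skewr k.-1 < 0 /\ skewr k.-1 < skewr k).
Proof.
move=> hk; have hr := rho_gt0; have r := skewr_rec hk.
have e : (2 * rho * rho + 2 * rho) * (skewr k.-1 - skewr k) =
    (2 * rho * rho + 2 * rho) * (skewr k - skewr k.+1) + (8 * rho + 6) * skewr k.
  apply/eqP; rewrite -subr_eq0; apply/eqP.
  transitivity ((2 * rho * rho + 2 * rho) * (skewr k.-1 + skewr k.+1) -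
    (4 * rho * rho + 12 * rho + 6) * skewr k); first by ring.
  by rewrite r subrr.
have hpos : 0 < 2 * rho * rho + 2 * rho by nra.
split=> h1 h2.
  have : 0 <= (2 * rho * rho + 2 * rho) * (skewr k.-1 - skewr k) by rewrite e; nra.
  by rewrite pmulr_rge0 // subr_ge0 => h3; split => //; lra.
have : (2 * rho * rho + 2 * rho) * (skewr k.-1 - skewr k) < 0 by rewrite e; nra.
by rewrite pmulr_rlt0 // subr_lt0 => h3; split => //; lra.
Qed.

Lemma skewr_ge0 : 0 <= skewr k0 -> forall k, (p <= k)%N -> (2 * k <= p + q)%N -> 0 <= skewr k.
Proof.
move=> h0 k hk1 hk2; case: (leqP k k0) => hk3; last first.
  rewrite /skewr; have -> : (p + q - k = k)%N by lia.
  by rewrite subrr.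
suff h : forall k, (p <= k <= k0)%N -> 0 <= skewr k /\ skewr k.+1 <= skewr k.
  by have [] := h k ltac:(lia).
apply: (@nat_down_ind (fun k => 0 <= skewr k /\ skewr k.+1 <= skewr k)).
  by split=> //; case: skewr_half => ->; lra.
move=> k' hk' [h1 h2]; have e : k'.-1.+1 = k' by lia.
by rewrite e; apply: (skewr_step hk').1.
Qed.

Lemma skewr_lt0 : skewr k0 < 0 -> skewr p < 0.
Proof.
move=> h0.
suff h : forall k, (p <= k <= k0)%N -> skewr k < 0 /\ skewr k < skewr k.+1.
  by have [] := h p ltac:(lia).
apply: (@nat_down_ind (fun k => skewr k < 0 /\ skewr k < skewr k.+1)).
  by split=> //; case: skewr_half => ->; lra.
move=> k' hk' [h1 h2]; have e : k'.-1.+1 = k' by lia.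
by rewrite e; apply: (skewr_step hk').2.
Qed.

Local Notation gv j := (dist_gap natdist p q j : R).
Local Notation gw e := (dist_gap natdist_vw p q e : R).

Lemma gap_U_pair_ge0 j : (0 < j <= l)%N -> 0 <= gv j * U j + gv (l.+1 - j) * U (l.+1 - j).
Proof.
have key i : (0 < i)%N -> (2 * i <= l.+1)%N ->
    0 <= gv i * U i + gv (l.+1 - i) * U (l.+1 - i).
  move=> h1 h2.
  have c1 : 0 <= gv i by rewrite /dist_gap subr_ge0 ler_nat /natdist; lia.
  have c2 : 0 <= gv i + gv (l.+1 - i).
    have -> : gv i + gv (l.+1 - i) = (natdist q i + natdist q (l.+1 - i))%:R -
        (natdist p i + natdist p (l.+1 - i))%:R :> R by rewrite /dist_gap !natrD; ring.
    by rewrite subr_ge0 ler_nat /natdist; lia.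
  case: (eqVneq (2 * i)%N l.+1) => he.
    have -> : (l.+1 - i)%N = i by lia.
    by have := U_gt0 (j := i) ltac:(lia); nra.
  have hA := skewv_gt0 (i := i) ltac:(lia); have hu := U_gt0 (j := l.+1 - i) ltac:(lia).
  have -> : gv i * U i + gv (l.+1 - i) * U (l.+1 - i) =
    gv i * skewv i + (gv i + gv (l.+1 - i)) * U (l.+1 - i) by rewrite /skewv; ring.
  by apply: addr_ge0; apply: mulr_ge0 => //; apply: ltW.
move=> hj; case: (leqP (2 * j) l.+1) => h; first by apply: key; lia.
have := key (l.+1 - j)%N ltac:(lia) ltac:(lia).
have -> : (l.+1 - (l.+1 - j))%N = j by lia.
by rewrite addrC.
Qed.

Lemma sum_gap_U_ge0 : 0 <= \sum_(1 <= j < l.+1) gv j * U j.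
Proof.
apply: sum_nat_ge0_mirror => j hj.
have -> : (1 + l.+1 - j.+1 = l.+1 - j)%N by lia.
by apply: gap_U_pair_ge0; lia.
Qed.

Definition W_out e := if (e <= a)%N || (q <= e)%N then W e else 0.
Definition W_in e := if (l - b <= e < q)%N then W e else 0.

Lemma W_out_in e : (0 < e < l)%N -> W e = W_out e + W_in e.
Proof.
move=> he; rewrite /W_out /W_in.
case: (leqP e a) => h1 /=; first by rewrite ifF ?addr0 //; lia.
case: (leqP q e) => h2 /=; first by rewrite ifF ?addr0 //; lia.
rewrite add0r; case: (leqP (l - b) e) => h3 //=.
by rewrite W_eq0 //; apply: notin_I_mid; lia.
Qed.

Lemma gap_W_out_pair_ge0 e : (0 < e < l)%N ->
  0 <= gw e * W_out e + gw (l - e) * W_out (l - e).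
Proof.
have key i : (0 < i <= a)%N -> 0 <= gw i * W_out i + gw (l - i) * W_out (l - i).
  move=> hi; rewrite /W_out ifT; last by apply/orP; left; lia.
  rewrite ifT; last by apply/orP; right; lia.
  have hB := skeww_gt0 hi; have hw := W_ge0 (l - i).
  have c1 : 0 <= gw i by rewrite /dist_gap subr_ge0 ler_nat /natdist_vw; repeat case: ifP; lia.
  have c2 : 0 <= gw i + gw (l - i).
    have -> : gw i + gw (l - i) = (natdist_vw q i + natdist_vw q (l - i))%:R -
        (natdist_vw p i + natdist_vw p (l - i))%:R :> R by rewrite /dist_gap !natrD; ring.
    by rewrite subr_ge0 ler_nat /natdist_vw; repeat case: ifP; lia.
  have -> : gw i * W i + gw (l - i) * W (l - i) =
      gw i * skeww i + (gw i + gw (l - i)) * W (l - i) by rewrite /skeww; ring.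
  by apply: addr_ge0; apply: mulr_ge0 => //; apply: ltW.
move=> he; case: (leqP e a) => h1; first by apply: key; lia.
case: (leqP q e) => h2.
  have := key (l - e)%N ltac:(lia); have -> : (l - (l - e))%N = e by lia.
  by rewrite addrC.
by rewrite /W_out !ifF ?mulr0 ?addr0 //; apply/negbTE/negP => /orP[]; lia.
Qed.

Lemma sum_gap_W_out_ge0 : 0 <= \sum_(1 <= e < l) gw e * W_out e.
Proof.
apply: sum_nat_ge0_mirror => e he.
have -> : (1 + l - e.+1 = l - e)%N by lia.
by apply: gap_W_out_pair_ge0; lia.
Qed.

Lemma sum_gap_W_in :
  \sum_(1 <= e < l) gw e * W_in e = gw (l - b) * W (l - b) + \sum_(p <= e < q) gw e * W e.
Proof.
rewrite (@big_cat_nat _ _ _ (l - b)) /=; try lia.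
rewrite big_nat_cond big1 ?add0r; last first.
  by move=> e /andP[/andP[_ ?] _]; rewrite /W_in ifF ?mulr0 //; lia.
rewrite (@big_cat_nat _ _ _ q) /=; try lia.
rewrite [X in _ + X]big_nat_cond [X in _ + X]big1 ?addr0; last first.
  by move=> e /andP[/andP[? _] _]; rewrite /W_in ifF ?mulr0 //; lia.
rewrite big_ltn; last by lia.
rewrite /W_in ifT; last by lia.
congr (_ + _); rewrite addn1.
by apply: eq_big_nat => e he; rewrite ifT //; lia.
Qed.

Lemma gap_vw_gt0 : 0 < gw (l - b).
Proof. by rewrite /dist_gap subr_gt0 ltr_nat /natdist_vw; repeat case: ifP; lia. Qed.

Section NonnegativeRightSkew.
Hypothesis skewr_nonneg : forall k, (p <= k)%N -> (2 * k <= p + q)%N -> 0 <= skewr k.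

Lemma gap_W_in_pair_ge0 e : (p <= e < q)%N ->
  0 <= gw e * W e + gw (p + q - e.+1) * W (p + q - e.+1).
Proof.
have hr := rho_gt0.
have key i : (p <= i)%N -> (2 * i <= p + q - 1)%N ->
    0 <= gw i * W i + gw (p + q - i.+1) * W (p + q - i.+1).
  move=> h1 h2; set i' := (p + q - i.+1)%N.
  case: (eqVneq (2 * i)%N (p + q - 1)%N) => he.
    have ei : i' = i by rewrite /i'; lia.
    have c0 : gw i = 0.
      by apply/eqP; rewrite subr_eq0 eqr_nat /natdist_vw; apply/eqP; repeat case: ifP; lia.
    by rewrite ei c0 !mul0r addr0.
  have c1 : 0 <= gw i by rewrite /dist_gap subr_ge0 ler_nat /natdist_vw; repeat case: ifP; lia.
  have c2 : gw i' = - gw i.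
    apply/eqP; rewrite -subr_eq0 opprK.
    have -> : gw i' + gw i = (natdist_vw q i' + natdist_vw q i)%:R -
        (natdist_vw p i' + natdist_vw p i)%:R :> R by rewrite /dist_gap !natrD; ring.
    by rewrite subr_eq0 eqr_nat /i' /natdist_vw; apply/eqP; repeat case: ifP; lia.
  have w := skewr_W (i := i) ltac:(lia).
  have p1 := skewr_nonneg (k := i) h1 ltac:(lia).
  have p2 := skewr_nonneg (k := i.+1) ltac:(lia) ltac:(lia).
  have d : 0 <= W i - W i' by rewrite /i'; nra.
  rewrite c2; have -> : gw i * W i + - gw i * W i' = gw i * (W i - W i') by ring.
  exact: mulr_ge0.
move=> he; case: (leqP (2 * e) (p + q - 1)) => h; first by apply: key; lia.
have := key (p + q - e.+1)%N ltac:(lia) ltac:(lia).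
have -> : (p + q - (p + q - e.+1).+1)%N = e by lia.
by rewrite addrC.
Qed.

Lemma sum_gap_W_in_ge0 : 0 <= \sum_(p <= e < q) gw e * W e.
Proof. by apply: sum_nat_ge0_mirror => e he; apply: gap_W_in_pair_ge0. Qed.

End NonnegativeRightSkew.

Hypothesis U_diff_gap : rho * (U q - U p) =
  \sum_(1 <= j < l.+1) gv j * U j + \sum_(1 <= e < l) gw e * W e.

Lemma U_lt_right_stretch : U p < U q.
Proof.
have hr := rho_gt0.
case: (ltrP (skewr k0) 0) => h.
  have := skewr_lt0 h; rewrite /skewr.
  have -> : (p + q - p = q)%N by lia.
  by rewrite subr_lt0.
have sW : \sum_(1 <= e < l) gw e * W e =
    \sum_(1 <= e < l) gw e * W_out e + \sum_(1 <= e < l) gw e * W_in e.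
  by rewrite -big_split; apply: eq_big_nat => e he /=; rewrite W_out_in //; ring.
have h1 := sum_gap_U_ge0; have h2 := sum_gap_W_out_ge0.
have h3 := sum_gap_W_in_ge0 (skewr_ge0 h); have h4 := gap_vw_gt0.
have h5 : 0 < W (l - b) by apply/W_gt0/inI_high; lia.
have h6 := U_diff_gap; rewrite sW sum_gap_W_in in h6.
have : 0 < rho * (U q - U p) by rewrite h6; nra.
by rewrite pmulr_rgt0 // subr_gt0.
Qed.

End Recurrence.

Section PositiveEigenvector.
Variables (R : realFieldType) (n a b : nat).
Variables (D : Vt n -> Vt n -> nat) (x : Vt n -> R) (rho : R).
Hypotheses (a2_le_b : (a + 2 <= b)%N) (b2_lt_l : (2 * b < ell n a b)%N).
Hypothesis hD : distance_matrix (T_vertices n a b) (T_edges n a b) D.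
Hypothesis heig : forall u, u \in T_vertices n a b ->
  \sum_(w in T_vertices n a b) (D u w)%:R * x w = rho * x u.
Hypothesis x_gt0 : forall u, u \in T_vertices n a b -> 0 < x u.
Local Notation l := (ell n a b).

Let ab_lt_l : (a + b < l)%N. Proof. lia. Qed.
Let l_gt1 : (1 < l)%N. Proof. lia. Qed.
Let rho_gt0 := eigen_gt0 ab_lt_l hD heig x_gt0 l_gt1.
Let U_gt0 := xv_gt0 ab_lt_l x_gt0.
Let U_rec := xv_rec ab_lt_l hD heig.
Let W_rec := xw_rec ab_lt_l hD heig.
Let U_rec_first := xv_rec_first ab_lt_l hD heig l_gt1.
Let U_rec_last := xv_rec_last ab_lt_l hD heig l_gt1.

Let W_gt0 j : inI n a b j -> 0 < xw a b x j.
Proof. by move=> hj; rewrite /xw hj; apply/x_gt0/ww_in_VS. Qed.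

Let W_eq0 j : ~~ inI n a b j -> xw a b x j = 0.
Proof. by rewrite /xw => /negbTE ->. Qed.

Lemma perron_low_skew i : (1 <= i <= a)%N ->
  x (vv n i) - x (vv n (l + 1 - i)) < x (vv n i.+1) - x (vv n (l - i)) /\
  x (ww n i) - x (ww n (l - i)) < x (vv n i.+1) - x (vv n (l - i)).
Proof.
move=> hi.
have h1 := skewv_lt_succ a2_le_b b2_lt_l rho_gt0 W_gt0 W_eq0 U_rec W_rec
  U_rec_first U_rec_last hi.
have h2 := skeww_lt_skewv_succ a2_le_b b2_lt_l rho_gt0 W_gt0 W_eq0 U_rec W_rec
  U_rec_first U_rec_last hi.
have hI' : inI n a b (l - i) by apply: inI_high; lia.
by move: h1 h2; rewrite /skewv /skeww /xv /xw (inI_low hi) hI' addn1.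
Qed.

Lemma perron_mid_skew i : (1 <= i <= (l - b - a - 1)./2 - 1)%N ->
  x (vv n (a + 2 + i)) - x (vv n (l - b - i)) <
    x (vv n (a + 1 + i)) - x (vv n (l - b + 1 - i)) /\
  0 < x (vv n (a + 2 + i)) - x (vv n (l - b - i)).
Proof.
move=> hi.
have dec := skewm_decreasing a2_le_b b2_lt_l rho_gt0 U_gt0 W_gt0 W_eq0 U_rec W_rec
  U_rec_first U_rec_last.
have [_ g1] := dec i ltac:(lia); have [g2 _] := dec i.+1 ltac:(lia).
move: g1 g2; rewrite /skewm /xv.
have -> : (a + 1 + i.+1 = a + 2 + i)%N by lia.
by have -> : (l - b + 1 - i.+1 = l - b - i)%N by lia.
Qed.

Lemma perron_right_stretch : x (vv n (l - b + 1)) < x (vv n (l - a)).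
Proof.
have U_diff_gap := xv_diff_weighted ab_lt_l hD heig (p := l - b + 1) (q := l - a)
  ltac:(lia) ltac:(lia).
by have := U_lt_right_stretch a2_le_b b2_lt_l rho_gt0 U_gt0 W_gt0 W_eq0 U_rec W_rec
  U_rec_first U_rec_last U_diff_gap.
Qed.

End PositiveEigenvector.

Theorem lemma3p3 (R : realType) (n a b : nat)
  (D : Vt n -> Vt n -> nat) (x : Vt n -> R) :
  (a + 2 <= b)%N ->
  (2 * (a + b) < n - 1)%N ->
  (2 * b < ell n a b)%N ->
  distance_matrix (T_vertices n a b) (T_edges n a b) D ->
  distance_perron_vector (T_vertices n a b) D x ->
  let l := ell n a b in
  [/\ (1 <= a)%N ->
        (forall i, (1 <= i <= a)%N ->
           x (vv n i) - x (vv n (l + 1 - i)) < x (vv n i.+1) - x (vv n (l - i)) /\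
           x (ww n i) - x (ww n (l - i)) < x (vv n i.+1) - x (vv n (l - i))),
      (forall i, (1 <= i <= (l - b - a - 1)./2 - 1)%N ->
           x (vv n (a + 2 + i)) - x (vv n (l - b - i)) <
             x (vv n (a + 1 + i)) - x (vv n (l - b + 1 - i)) /\
           0 < x (vv n (a + 2 + i)) - x (vv n (l - b - i)))
    & x (vv n (l - b + 1)) < x (vv n (l - a))].
Proof.
move=> a2_le_b _ b2_lt_l hD [rho [[_ heig] _ x_gt0 _]] l.
split=> [_ i|i|]; first exact: perron_low_skew a2_le_b b2_lt_l hD heig x_gt0 i.
  exact: perron_mid_skew a2_le_b b2_lt_l hD heig x_gt0 i.
exact: perron_right_stretch a2_le_b b2_lt_l hD heig x_gt0.
Qed.
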